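(* Let $G$ be a countable infinite discrete group, $X$ an infinite compact Hausdorff space and $\beta: G\curvearrowright X$ a minimal, topologically free continuous action with no $G$-invariant regular Borel probability measure and with dynamical comparison. Let $Y$ be a compact Hausdorff space and $\alpha: G\curvearrowright X\times Y$ the action $\alpha_g(x,y)=(\beta_g(x),y)$; let $\pi_Y: X\times Y\to Y$ be the projection. Then: (i) every $G$-invariant closed subset $M\subset X\times Y$ satisfies $M=X\times\pi_Y(M)$; (ii) $\alpha$ is essentially free.
   Context: Subequivalence for $\beta$: for closed $F$ and open $O$ in $X$, $F\prec O$ if there exist a finite open cover $\mathcal{U}$ of $F$ and $s_U\in G$ with the sets $\beta_{s_U}(U)$ pairwise disjoint subsets of $O$; for open $V$, $V\prec O$ means $F\prec O$ for all closed $F\subset V$. Dynamical comparison: $V\prec O$ for every open $V$ and nonempty open $O$ with $\mu(V)<\mu(O)$ for all $G$-invariant regular Borel probability measures $\mu$. Topologically free: fixed point sets of non-identity elements have empty interior. Essentially free: for every closed $G$-invariant subset $Z$ the set of points of $Z$ with trivial stabilizer is dense in $Z$. *)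

From mathcomp Require Import all_boot all_order all_algebra.
From mathcomp Require Import all_classical all_reals all_analysis.
Set Implicit Arguments. Unset Strict Implicit. Unset Printing Implicit Defensive.
Import Order.TTheory GRing.Theory Num.Theory.
Local Open Scope classical_set_scope.
Local Open Scope ring_scope.

Definition is_group (G : Type) (mul : G -> G -> G) (one : G) (inv : G -> G) :=
  [/\ (forall a b c, mul a (mul b c) = mul (mul a b) c),
      (forall a, mul one a = a), (forall a, mul a one = a),
      (forall a, mul (inv a) a = one) & (forall a, mul a (inv a) = one)].

Definition is_action (G T : Type) (mul : G -> G -> G) (one : G)
  (act : G -> T -> T) :=
  (forall x, act one x = x) /\
  (forall g h x, act (mul g h) x = act g (act h x)).

Definition invariant_set (G T : Type) (act : G -> T -> T) (A : set T) :=
  forall g x, A x -> A (act g x).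

Definition minimal_action (G : Type) (X : topologicalType) (act : G -> X -> X) :=
  forall A : set X, closed A -> invariant_set act A -> A = set0 \/ A = setT.

Definition topologically_free (G : Type) (one : G) (X : topologicalType)
  (act : G -> X -> X) :=
  forall g, g <> one -> interior [set x | act g x = x] = set0.

Definition essentially_free (G : Type) (one : G) (X : topologicalType)
  (act : G -> X -> X) :=
  forall Z : set X, closed Z -> invariant_set act Z ->
    Z `<=` closure [set z | Z z /\ (forall g, act g z = z -> g = one)].

Definition subequiv_closed (G : Type) (X : topologicalType) (act : G -> X -> X)
  (F O : set X) :=
  exists (n : nat) (U : nat -> set X) (s : nat -> G),
    [/\ (forall i, (i < n)%N -> open (U i)),
        F `<=` \bigcup_(i in `I_n) U i,
        (forall i, (i < n)%N -> act (s i) @` U i `<=` O) &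
        (forall i j, (i < n)%N -> (j < n)%N -> i <> j ->
           act (s i) @` U i `&` act (s j) @` U j = set0)].

Definition subequiv_open (G : Type) (X : topologicalType) (act : G -> X -> X)
  (V O : set X) :=
  forall F : set X, closed F -> F `<=` V -> subequiv_closed act F O.

Notation borelType X := (g_sigma_algebraType (@open X)).

Definition inv_reg_borel_prob (G : Type) (X : ptopologicalType) (R : realType)
  (act : G -> X -> X) (mu : {measure set (borelType X) -> \bar R}) :=
  [/\ mu setT = 1%E,
      (forall A : set (borelType X), measurable A ->
         mu A = ereal_inf [set mu U | U in [set U : set X | open U /\ A `<=` U]]),
      (forall A : set (borelType X), measurable A ->
         mu A = ereal_sup [set mu K | K in [set K : set X | compact K /\ K `<=` A]]) &
      (forall g (A : set (borelType X)), measurable A ->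
         mu (act g @^-1` A) = mu A)].

Definition dynamical_comparison (G : Type) (X : ptopologicalType) (R : realType)
  (act : G -> X -> X) :=
  forall V O : set X, open V -> open O -> O !=set0 ->
    (forall mu : {measure set (borelType X) -> \bar R},
        inv_reg_borel_prob act mu -> (mu V < mu O)%E) ->
    subequiv_open act V O.

Definition prod_action (G : Type) (X Y : Type) (beta : G -> X -> X) :
  G -> X * Y -> X * Y := fun g p => (beta g p.1, p.2).

From mathcomp Require Import all_boot all_order all_algebra.
From mathcomp Require Import all_classical all_reals all_analysis.
Local Open Scope classical_set_scope.
Local Open Scope ring_scope.

(** A closed invariant subset of [X * Y]
    meets each horizontal line [X * {y}] in a closed invariant subset of [X],
    which by minimality is empty or all of [X]; this gives (i).  For (ii),
    the fixed-point sets of the countably many non-identity elements are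
    closed and nowhere dense, so by the Baire category theorem for compact
    Hausdorff spaces the points of [X] with trivial stabiliser are dense.
    Since [(x, y)] and [x] have the same stabiliser and, by (i), every
    closed invariant [Z] contains [(x', y)] whenever it contains [(x, y)],
    the points of [Z] with trivial stabiliser are dense in [Z]. *)

Lemma closed_fixpoints {X : topologicalType} {f : X -> X} :
  hausdorff_space X -> continuous f -> closed [set x | f x = x].
Proof.
move=> HX cf x clx; apply: HX => A B nA nB /=.
have nfA : nbhs x (f @^-1` A) by exact: cf.
have [z [/= fz [Az Bz]]] := clx _ (filterI nfA nB).
by exists z; split => //; rewrite -fz.
Qed.

Lemma setD_interior0_neq0 {X : topologicalType} {V F : set X} :
  open V -> V !=set0 -> F° = set0 -> V `\` F !=set0.
Proof.
move=> oV [v Vv] F0; apply: contrapT => VF0.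
have VF : V `<=` F by move=> w Vw; apply: contrapT => Fw; apply: VF0; exists w.
by have := interiorS VF; rewrite (proj1 (interior_id V) oV) F0 => /(_ v Vv).
Qed.

Section CompactBaire.
Context {X : ptopologicalType}.
Hypotheses (HX : hausdorff_space X) (cX : compact [set: X]).

Lemma compact_nested_closed_neq0 (C : nat -> set X) :
  (forall n, closed (C n)) -> (forall n, C n.+1 `<=` C n) ->
  (forall n, C n !=set0) -> \bigcap_n C n !=set0.
Proof.
move=> Ccl Csub Cne.
have Cmono m n : (m <= n)%N -> C n `<=` C m.
  move=> /subnK <-; elim: (n - m)%N => [|k IH] //.
  by rewrite addSn; exact: subset_trans (Csub _) IH.
move: cX; rewrite compact_In0 => /(_ nat setT C); apply.
  by exists C => [n _|n _]; [exact: Ccl | rewrite setTI].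
move=> D _; have [z Cz] := Cne (\max_(i <- finmap.enum_fset D) i)%N.
by exists z => i /= Di; apply: Cmono Cz; exact: (@leq_bigmax_seq _ _ xpredT id i).
Qed.

Lemma open_shrink {O : set X} :
  open O -> O !=set0 -> exists W, [/\ open W, W !=set0 & closure W `<=` O].
Proof.
move=> oO [x Ox].
have nO : nbhs x O by exact: open_nbhs_nbhs.
have [D nD cD] := @compact_regular X x setT HX cX filterT _ nO.
exists D°; split; [exact: open_interior | by exists x |].
by move=> z /(closureS (@interior_subset _ D)) /cD.
Qed.

Theorem compact_baire {F : nat -> set X} :
  (forall n, closed (F n)) -> (forall n, (F n)° = set0) ->
  dense (\bigcap_n ~` F n).
Proof.
move=> Fcl F0 U U0 oU.
have shrink (nV : nat * set X) : exists W, open nV.2 /\ nV.2 !=set0 ->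
    [/\ open W, W !=set0 & closure W `<=` nV.2 `\` F nV.1].
  case: nV => n V.
  have [[oV V0]|] := pselect (open V /\ V !=set0); last by exists set0.
  have oVF : open (V `\` F n) by exact: openI oV (closed_openC (Fcl n)).
  have [W ?] := open_shrink oVF (setD_interior0_neq0 oV V0 (F0 n)).
  by exists W.
have [g hg] := choice shrink.
pose V := fix V n := if n is m.+1 then g (m, V m) else U.
have Vopen_neq0 n : open (V n) /\ V n !=set0.
  by elim: n => [|n [oV V0]] //=; have [] := hg (n, V n) (conj oV V0).
have Vsub n : closure (V n.+1) `<=` V n `\` F n.
  by have [] := hg (n, V n) (Vopen_neq0 n).
have [|n|n|z Cz] := @compact_nested_closed_neq0 (fun n => closure (V n.+1)).
- by move=> n; exact: closed_closure.
- by move=> x /Vsub [/subset_closure].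
- by have [v Vv] := (Vopen_neq0 n.+1).2; exists v; exact: subset_closure.
exists z; split; first by have [] := Vsub 0%N z (Cz 0%N I).
by move=> n _; have [] := Vsub n z (Cz n I).
Qed.

Theorem countable_compact_baire {I : Type} {F : I -> set X} :
  countable [set: I] -> (forall i, closed (F i)) -> (forall i, (F i)° = set0) ->
  dense (\bigcap_i ~` F i).
Proof.
move=> /pfcard_geP[I0 _ _ U U0 _ | /surjfunPex[e Ie] Fcl F0 U U0 oU].
  by rewrite I0 bigcap_set0 setIT.
have [z [Uz Fz]] :=
  compact_baire (fun n => Fcl (e n)) (fun n => F0 (e n)) U U0 oU.
exists z; split => // i _; have : [set: I] i by [].
by rewrite Ie => -[n _ <-]; exact: Fz.
Qed.

End CompactBaire.

Lemma dense_free_points {G : Type} {one : G} {X : ptopologicalType}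
  {beta : G -> X -> X} :
  hausdorff_space X -> compact [set: X] -> countable [set: G] ->
  (forall g, continuous (beta g)) -> topologically_free one beta ->
  dense [set x | forall g, beta g x = x -> g = one].
Proof.
move=> HX cX cG cbeta tfree.
pose F g := [set x | g <> one /\ beta g x = x].
have Fnowhere_dense g : closed (F g) /\ (F g)° = set0.
  have [->|ng] := pselect (g = one).
    have -> : F one = set0 by apply/seteqP; split=> // x [].
    by split; [exact: closed0 | exact: interior0].
  have -> : F g = [set x | beta g x = x].
    by apply/seteqP; split=> x /=; [case | split].
  by split; [exact: closed_fixpoints | exact: tfree].
move=> U U0 oU.
have [x [Ux Fx]] := countable_compact_baire HX cX cG
  (fun g => (Fnowhere_dense g).1) (fun g => (Fnowhere_dense g).2) U U0 oU.
exists x; split => // g gx; apply: contrapT => ng; exact: Fx g I (conj ng gx).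
Qed.

Section MinimalProductAction.
Context {G : Type} {X Y : topologicalType} {beta : G -> X -> X}.
Hypothesis minb : minimal_action beta.

Lemma minimal_prod_slice {M : set (X * Y)} :
  closed M -> invariant_set (prod_action beta) M ->
  forall x y x', M (x, y) -> M (x', y).
Proof.
move=> clM invM x y x' Mxy.
pose S := (fun z : X => (z, y)) @^-1` M.
have clS : closed S.
  apply: preimage_closed => // p _.
  by apply: cvg_pair; [exact: cvg_id | exact: cvg_cst].
have invS : invariant_set beta S by move=> g z; exact: invM g (z, y).
case: (minb S clS invS) => S0; last by have : S x' by rewrite S0.
by have : S x by []; rewrite S0.
Qed.

Lemma minimal_prod_closed_invariant (M : set (X * Y)) :
  closed M -> invariant_set (prod_action beta) M -> M = [set: X] `*` (snd @` M).
Proof.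
move=> clM invM; apply/seteqP; split=> [[x y] Mxy|[x y] [_ [[x0 y0] M0 /= <-]]].
  by split=> //; exists (x, y).
exact: minimal_prod_slice clM invM x0 y0 x M0.
Qed.

Lemma minimal_prod_essentially_free (one : G) :
  dense [set x | forall g, beta g x = x -> g = one] ->
  essentially_free one (prod_action (Y:=Y) beta).
Proof.
move=> dfree Z clZ invZ [x y] Zxy B [[P Q] /= [nP nQ] PQB].
have [x' [Px' x'free]] := dfree P° (ex_intro _ x nP) (@open_interior _ P).
exists (x', y); split; last first.
  by apply: PQB; split; [exact: interior_subset | exact: nbhs_singleton].
split; first exact: minimal_prod_slice clZ invZ x y x' Zxy.
by move=> g [/x'free].
Qed.

End MinimalProductAction.

Theorem proposition5p1
  (G : Type) (mul : G -> G -> G) (one : G) (inv : G -> G)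
  (HG : is_group mul one inv)
  (Gcount : countable [set: G]) (Ginf : infinite_set [set: G])
  (X : ptopologicalType) (HX : hausdorff_space X) (cX : compact [set: X])
  (Xinf : infinite_set [set: X])
  (R : realType)
  (beta : G -> X -> X) (Hbeta : is_action mul one beta)
  (cbeta : forall g, continuous (beta g))
  (minb : minimal_action beta) (tfree : topologically_free one beta)
  (nomeas : forall mu : {measure set (borelType X) -> \bar R},
      ~ inv_reg_borel_prob beta mu)
  (comp : dynamical_comparison R beta)
  (Y : topologicalType) (HY : hausdorff_space Y) (cY : compact [set: Y]) :
  (forall M : set (X * Y), closed M ->
      invariant_set (prod_action (Y:=Y) beta) M ->
      M = [set: X] `*` (snd @` M)) /\
  essentially_free one (prod_action (Y:=Y) beta).
Proof.
split; first exact: (minimal_prod_closed_invariant minb).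
apply: (minimal_prod_essentially_free minb).
exact: (dense_free_points HX cX Gcount cbeta tfree).
Qed.
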